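(* For every constant $k>0$ there is a constant $K$ such that the following holds for all even $n$. Let $a$ be even with $0\le a<n/2$, and let $y\in\{0,1\}^n$ with $\min\{|y|_1,n-|y|_1\}=a$. Let $N\ge N_a:=K a^{5/2}n^2/(n-2a)^{3/2}$. Independently $N$ times, sample an offspring of $y$ by flipping exactly $n/2$ positions chosen uniformly at random (without repetition), and let $Y$ be the number of offspring $z$ with $|z|_1=n/2$. Then, if $a\ge 2$, $$\Pr\big(Y\ge N(p_a+p_{a-2})/2\big)\le\exp\!\big(-k(n-2a)^{1/2}\big),$$ and if $a\le n/2-2$, $$\Pr\big(Y\le N(p_a+p_{a+2})/2\big)\le\exp\!\big(-k(n-2a)^{1/2}\big).$$
   Context: For $x\in\{0,1\}^n$, $|x|_1=\sum_ix_i$. For even $b$ with $0\le b\le n/2$, $p_b:=\binom{n-b}{(n-b)/2}\binom{b}{b/2}\big/\binom{n}{n/2}$; this is the probability that flipping exactly $n/2$ uniformly random positions of a string $x$ with $\min\{|x|_1,n-|x|_1\}=b$ yields a string with exactly $n/2$ ones. *)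

From mathcomp Require Import all_boot.
From Stdlib Require Import Reals.

Set Implicit Arguments.
Unset Strict Implicit.
Unset Printing Implicit Defensive.

Definition weight (n : nat) (x : {ffun 'I_n -> bool}) : nat := #|[set i | x i]|.

Definition flip (n : nat) (x : {ffun 'I_n -> bool}) (S : {set 'I_n})
  : {ffun 'I_n -> bool} := [ffun i => addb (x i) (i \in S)].

(* An outcome of the experiment: N independent choices of a set of flipped
   positions. The sample space is the set of such choices where each chosen
   set has exactly n/2 elements, with the uniform distribution (= N
   independent uniform n/2-subsets). *)
Definition valid_sample (n N : nat) (f : {ffun 'I_N -> {set 'I_n}}) : bool :=
  [forall j, #|f j| == n %/ 2].

Definition Ycount (n N : nat) (y : {ffun 'I_n -> bool})
  (f : {ffun 'I_N -> {set 'I_n}}) : nat :=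
  #|[set j : 'I_N | weight (flip y (f j)) == n %/ 2]|.

Definition prob_event (n N : nat) (E : {ffun 'I_N -> {set 'I_n}} -> bool) : R :=
  Rdiv (INR #|[set f | valid_sample (n:=n) (N:=N) f && E f]|)
       (INR #|[set f | valid_sample (n:=n) (N:=N) f]|).

Definition Rleb (x y : R) : bool := if Rle_dec x y then true else false.

Definition p_succ (n b : nat) : R :=
  Rdiv (INR ('C(n - b, (n - b) %/ 2) * 'C(b, b %/ 2)))
       (INR 'C(n, n %/ 2)).

Set Warnings "-notation-overridden,-ambiguous-paths".
From mathcomp Require Import all_boot all_order all_algebra.
From mathcomp Require Import Rstruct.
From mathcomp Require Import zify.
From Stdlib Require Import Reals Lra Psatz.

Set Implicit Arguments.
Unset Strict Implicit.
Unset Printing Implicit Defensive.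

(* Each offspring of y is [flip y S] for a uniform half-size set S, and it is
   balanced exactly when S takes half of the ones and half of the zeros of y;
   counting such S shows that Y is binomial with parameters N and p_a.  Chernoff
   bounds, obtained from the moment generating function (1 - p + p e^s)^N, bound
   the probability that Y crosses the midpoint between p_a and p_(a±2) by
   exp (- N g^2 / (32 p_a)), where g = |p_a - p_(a±2)|.
   With p_b written through central binomial coefficients, p_(b+2) / p_b is an
   explicit rational function of n and b; it gives g / p_a >= (n - 2a) / (4 n a).
   The estimates 16^j / (4 j) <= C(2j, j)^2 <= 16^j / (3 j + 1) give
   p_a^2 a >= 3 / 8.  Together, N g^2 / p_a >= N (n - 2a)^2 / (32 n^2 a^(5/2)),
   which is at least 32 k (n - 2a)^(1/2) once N >= 1024 k a^(5/2) n^2 / (n - 2a)^(3/2).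
   For a = 0 every offspring is balanced and the lower-tail event is empty. *)

Definition cbin (j : nat) : nat := 'C(j.*2, j).

Lemma cbin_gt0 j : 0 < cbin j.
Proof. by rewrite bin_gt0 -addnn leq_addr. Qed.

Lemma cbin_fact j : cbin j * (j`! * j`!) = (j.*2)`!.
Proof. by rewrite /cbin -[RHS](@bin_fact _ j) -addnn ?leq_addr ?addnK. Qed.

Lemma cbinS j : cbin j.+1 * j.+1 = 2 * j.*2.+1 * cbin j.
Proof.
have := cbin_fact j.+1; rewrite doubleS !factS -(cbin_fact j) => e.
apply/eqP; rewrite -(eqn_pmul2r (fact_gt0 j)) -(eqn_pmul2r (fact_gt0 j)).
rewrite -(eqn_pmul2r (ltn0Sn j)); apply/eqP.
by move: e; move: (cbin j.+1) (cbin j) (j`!) => x c f; nia.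
Qed.

Lemma cbin_sqr_ub j : (3 * j + 1) * (cbin j * cbin j) <= expn 16 j.
Proof.
elim: j => [//|j IH]; rewrite expnS.
have e := cbinS j; move: (cbin j.+1) (cbin j) e IH => x c e IH.
have : (3 * j + 4) * (x * x) * (j.+1 * j.+1) <= 16 * expn 16 j * (j.+1 * j.+1).
  apply: (@leq_trans (16 * ((3 * j + 1) * (c * c)) * (j.+1 * j.+1))); last first.
    by rewrite !leq_mul2r leq_mul2l IH !orbT.
  have -> : (3 * j + 4) * (x * x) * (j.+1 * j.+1) = (3 * j + 4) * (x * j.+1) * (x * j.+1) by nia.
  rewrite e; have : (3 * j + 4) * (j.*2.+1 * j.*2.+1) <= 4 * (3 * j + 1) * (j.+1 * j.+1) by nia.
  nia.
have -> : 3 * j.+1 + 1 = 3 * j + 4 by lia.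
by rewrite leq_pmul2r ?muln_gt0.
Qed.

Lemma cbin_sqr_lb j : 0 < j -> expn 16 j <= 4 * j * (cbin j * cbin j).
Proof.
elim: j => [//|[|j] IH _]; first by [].
rewrite expnS; have e := cbinS j.+1.
move: (cbin j.+2) (cbin j.+1) e (IH isT) => x c e IH'.
have : 16 * expn 16 j.+1 * (j.+2 * j.+2) <= 4 * j.+2 * (x * x) * (j.+2 * j.+2).
  apply: (@leq_trans (16 * (4 * j.+1 * (c * c)) * (j.+2 * j.+2))).
    by rewrite !leq_mul2r leq_mul2l IH' !orbT.
  have -> : 4 * j.+2 * (x * x) * (j.+2 * j.+2) = 4 * j.+2 * ((x * j.+2) * (x * j.+2)) by nia.
  rewrite e; have : 4 * j.+1 * j.+2 <= (j.+1).*2.+1 * (j.+1).*2.+1 by nia.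
  nia.
by rewrite leq_pmul2r ?muln_gt0.
Qed.

Lemma cbin_addn_sqr_ub A B : 0 < A -> 0 < B ->
  3 * (cbin (A + B) * cbin (A + B)) <= 16 * A * ((cbin A * cbin A) * (cbin B * cbin B)).
Proof.
move=> A_gt0 B_gt0; rewrite -(leq_pmul2l B_gt0).
have ubAB := cbin_sqr_ub (A + B); rewrite expnD in ubAB.
have lbAB := leq_mul (cbin_sqr_lb A_gt0) (cbin_sqr_lb B_gt0).
move: (cbin A) (cbin B) (cbin (A + B)) ubAB lbAB => a b c ubAB lbAB.
apply: (@leq_trans ((3 * (A + B) + 1) * (c * c))).
  by rewrite mulnA leq_mul2r; apply/orP; right; lia.
apply: (leq_trans ubAB); apply: (leq_trans lbAB).
by apply: eq_leq; nia.
Qed.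

Lemma cbin_cross A B :
  cbin B * cbin A.+1 * (B.*2.+1 * A.+1) = cbin B.+1 * cbin A * (B.+1 * A.*2.+1).
Proof.
have := cbinS A; have := cbinS B.
move: (cbin A) (cbin A.+1) (cbin B) (cbin B.+1) => a a' c c' eB eA.
have -> : c * a' * (B.*2.+1 * A.+1) = (a' * A.+1) * (c * B.*2.+1) by nia.
have -> : c' * a * (B.+1 * A.*2.+1) = (c' * B.+1) * (a * A.*2.+1) by nia.
rewrite eA eB; nia.
Qed.

Lemma even_halfK m : ~~ odd m -> (m %/ 2).*2 = m.
Proof. by move=> even_m; rewrite divn2 -[RHS]odd_double_half (negbTE even_m). Qed.

Lemma card_sets_split (T : finType) (O : {set T}) i j :
  #|[set S : {set T} | (#|S :&: O| == i) && (#|S :\: O| == j)]| =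
  'C(#|O|, i) * 'C(#|~: O|, j).
Proof.
rewrite -(cards_draws O i) -(cards_draws (~: O) j) -cardsX.
set D := setX _ _; pose join (X : {set T} * {set T}) := X.1 :|: X.2.
have splitK X : X \in D -> (join X :&: O, join X :\: O) = X.
  case: X => [A1 A2]; rewrite !inE /= => /andP[/andP[/subsetP s1 _] /andP[/subsetP s2 _]].
  congr pair; apply/setP => x; rewrite !inE;
    by case: (boolP (x \in A1)) => [/s1|]; case: (boolP (x \in A2)) => [/s2|]; rewrite ?inE;
       case: (x \in O).
rewrite -(card_in_imset (f := join)); last first.
  by move=> X1 X2 /splitK e1 /splitK e2 e; rewrite -e1 -e2 e.
congr #|pred_of_set _|; apply/setP => S; rewrite inE; apply/idP/imsetP.
  move=> /andP[/eqP h1 /eqP h2]; exists (S :&: O, S :\: O); last by rewrite /join /= setID.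
  by rewrite !inE /= h1 h2 !eqxx subsetIr setDE subsetIr.
case=> X XD ->; move: (XD); rewrite -{1}(splitK _ XD) !inE /=.
by case/andP=> /andP[_ ->] /andP[_ ->].
Qed.

Definition half_sets n : {set {set 'I_n}} := [set S : {set 'I_n} | #|S| == n %/ 2].

Definition balancing_sets n (y : {ffun 'I_n -> bool}) : {set {set 'I_n}} :=
  [set S in half_sets n | weight (flip y S) == n %/ 2].

Lemma weight_le n (y : {ffun 'I_n -> bool}) : weight y <= n.
Proof. by rewrite -[n in _ <= n]card_ord max_card. Qed.

Lemma minn_weight_le n (y : {ffun 'I_n -> bool}) : minn (weight y) (n - weight y) <= n.
Proof. exact: leq_trans (geq_minr _ _) (leq_subr _ _). Qed.

Lemma weight_flip n (y : {ffun 'I_n -> bool}) S :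
  weight (flip y S) = #|[set i | y i] :\: S| + #|S :\: [set i | y i]|.
Proof.
have disj : ([set i | y i] :\: S) :&: (S :\: [set i | y i]) = set0.
  by apply/setP => i; rewrite !inE; case: (y i); case: (i \in S).
rewrite -cardsUI disj cards0 addn0 /weight.
by apply: eq_card => i; rewrite !inE ffunE; case: (y i); case: (i \in S).
Qed.

Lemma card_half_sets n : #|half_sets n| = 'C(n, n %/ 2).
Proof. by rewrite card_draws card_ord. Qed.

Lemma balancing_sets_sub n (y : {ffun 'I_n -> bool}) : balancing_sets y \subset half_sets n.
Proof. by apply/subsetP => S; rewrite inE => /andP[]. Qed.

Lemma card_balancing_sets n (y : {ffun 'I_n -> bool}) : ~~ odd n -> ~~ odd (weight y) ->
  #|balancing_sets y| = 'C(weight y, weight y %/ 2) * 'C(n - weight y, (n - weight y) %/ 2).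
Proof.
move=> even_n even_w; set O := [set i | y i].
have cardCO : #|~: O| = n - weight y by rewrite cardsCs card_ord setCK.
rewrite -cardCO -card_sets_split cardCO; congr #|pred_of_set _|.
apply/setP => S; rewrite !inE weight_flip.
have := cardsID O S; have := cardsID S O; rewrite setIC.
have := weight_le y; have := even_halfK even_n; have := even_halfK even_w.
rewrite /weight -/O.
move: #|S :&: O| #|S :\: O| #|O :\: S| #|S| #|O| => i j l s w.
by move=> *; apply/idP/idP => /andP[/eqP h1 /eqP h2]; apply/andP; split; apply/eqP; lia.
Qed.

Lemma exp_le_exp x y : (x <= y -> exp x <= exp y)%R.
Proof. by case/Rle_lt_or_eq_dec => [/exp_increasing/Rlt_le | ->]; last exact: Rle_refl. Qed.

Section ExponentialMoments.
Import GRing.Theory Num.Theory.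
Local Open Scope ring_scope.

Lemma sum_ffun_on_exp_count (R : comPzSemiRingType) (T : finType) (N : nat) (V G : {set T})
    (x : R) :
  G \subset V ->
  \sum_(f in ffun_on (mem V)) x ^+ #|[set j : 'I_N | f j \in G]| =
    (#|V :\: G|%:R + #|G|%:R * x) ^+ N.
Proof.
move=> /subsetP subGV.
have row : \sum_(S in V) (if S \in G then x else 1) = #|V :\: G|%:R + #|G|%:R * x.
  rewrite (bigID (mem G)) /= addrC mulr_natl; congr (_ + _).
    rewrite (eq_bigr (fun _ => 1)) => [|S /andP[_ /negbTE ->] //].
    by rewrite sumr_const; congr _%:R; apply: eq_card => S; rewrite !inE andbC.
  rewrite (eq_bigr (fun _ => x)) => [|S /andP[_ ->] //].
  rewrite sumr_const; congr (_ *+ _); apply: eq_card => S; rewrite unfold_in /=.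
  by apply/andP/idP => [[] | GS] //; split => //; apply: subGV.
rewrite -row -[N in RHS]card_ord -prodr_const bigA_distr_big.
apply: eq_bigr => f _; rewrite -big_mkcond /= prodr_const.
by congr (_ ^+ _); apply: eq_card => j; rewrite inE.
Qed.

Lemma card_ffun_on_chernoff (T : finType) (N : nat) (V G : {set T})
    (E : pred {ffun 'I_N -> T}) (s c : R) :
  G \subset V ->
  (forall f, f \in ffun_on (mem V) -> E f -> (s * c <= s * INR #|[set j | f j \in G]|)%R) ->
  (INR #|[set f in ffun_on (mem V) | E f]| <=
     (INR #|V :\: G| + INR #|G| * exp s) ^ N * exp (- (s * c)))%R.
Proof.
move=> subGV tailE; apply/RleP.
rewrite !INRE RpowE -(@sum_ffun_on_exp_count _ _ N V G (exp s) subGV).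
rewrite [X in _ <= X]RmultE mulr_suml (bigID E) /= -[X in X <= _]addr0 lerD //; last first.
  by apply: sumr_ge0 => f _; rewrite expRX expRD; apply/RleP/Rlt_le/exp_pos.
rewrite (_ : _%:R = \sum_(f in ffun_on (mem V) | E f) 1); last first.
  by rewrite sumr_const; congr _%:R; apply: eq_card => f; rewrite inE.
(* On the event, [1 <= exp (s * count - s * c)]. *)
apply: ler_sum => f /andP[Vf Ef].
rewrite expRX expRD -expR0; apply/RleP/exp_le_exp/RleP.
by rewrite subr_ge0 -mulr_natr -INRE; apply/RleP/tailE.
Qed.

End ExponentialMoments.

Section RealBounds.
Local Open Scope R_scope.

Lemma pow_le_exp_mul z N : 0 <= 1 + z -> (1 + z) ^ N <= exp (INR N * z).
Proof.
move=> z_ge; elim: N => [|N IH]; first by rewrite /= Rmult_0_l exp_0; lra.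
rewrite S_INR Rmult_plus_distr_r Rmult_1_l exp_plus /= [X in _ <= X]Rmult_comm.
apply: Rmult_le_compat => //; first exact: pow_le.
by have := exp_ineq1_le z; lra.
Qed.

Lemma exp_le_quadratic s : 0 <= s <= 1 / 2 -> exp s <= 1 + s + 2 * s ^ 2.
Proof.
move=> s_bounds; have := exp_ineq1_le (- s); rewrite exp_Ropp => inv_ge.
have exp_s_gt0 := exp_pos s.
have : exp s * (1 - s) <= 1.
  by have := Rmult_le_compat_l _ _ _ (Rlt_le _ _ exp_s_gt0) inv_ge; rewrite Rinv_r; lra.
nra.
Qed.

Lemma exp_opp_le_quadratic s : 0 <= s -> exp (- s) <= 1 - s + s ^ 2.
Proof.
move=> s_ge0; rewrite exp_Ropp; have exp_s_gt0 := exp_pos s.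
apply: (Rmult_le_reg_l (exp s)) => //; rewrite Rinv_r; last by lra.
have := Rmult_le_compat_r (1 - s + s ^ 2) _ _ ltac:(nra) (exp_ineq1_le s); nra.
Qed.

Lemma chernoff_upper_core (p d : R) N : 0 < p -> 0 <= d <= 2 * p ->
  (1 - p + p * exp (d / (4 * p))) ^ N * exp (- (d / (4 * p) * (INR N * (p + d)))) <=
    exp (- (INR N * d ^ 2 / (8 * p))).
Proof.
move=> p_gt0 d_bounds; set s := d / (4 * p); have s_p : s * (4 * p) = d by rewrite /s; field; lra.
have N_ge0 := pos_INR N.
have mgf_le : (1 - p + p * exp s) ^ N <= exp (INR N * (p * (s + 2 * s ^ 2))).
  have /exp_le_quadratic exp_s : 0 <= s <= 1 / 2 by split; nra.
  apply: Rle_trans (pow_le_exp_mul N _); last by have := exp_ineq1_le s; nra.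
  by apply: pow_incr; have := exp_ineq1_le s; nra.
apply: Rle_trans (Rmult_le_compat_r _ _ _ (Rlt_le _ _ (exp_pos _)) mgf_le) _.
rewrite -exp_plus; apply: exp_le_exp; right; rewrite /s; field; lra.
Qed.

Lemma chernoff_lower_core (p d : R) N : 0 < p <= 1 -> 0 <= d ->
  (1 - p + p * exp (- (d / (2 * p)))) ^ N * exp (- (- (d / (2 * p)) * (INR N * (p - d)))) <=
    exp (- (INR N * d ^ 2 / (4 * p))).
Proof.
move=> p_bounds d_ge0; set s := d / (2 * p); have s_p : s * (2 * p) = d by rewrite /s; field; lra.
have N_ge0 := pos_INR N; have /exp_opp_le_quadratic exp_s : 0 <= s by nra.
have mgf_le : (1 - p + p * exp (- s)) ^ N <= exp (INR N * (p * (- s + s ^ 2))).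
  apply: Rle_trans (pow_le_exp_mul N _); last by have := exp_pos (- s); nra.
  by apply: pow_incr; have := exp_pos (- s); nra.
apply: Rle_trans (Rmult_le_compat_r _ _ _ (Rlt_le _ _ (exp_pos _)) mgf_le) _.
rewrite -exp_plus; apply: exp_le_exp; right; rewrite /s; field; lra.
Qed.

Lemma tail_exponent_ge (k a n m N p g : R) :
  0 < k -> 0 < a -> 0 < n -> 0 < m -> 0 < p -> 3 / 8 <= p ^ 2 * a ->
  m * p <= 4 * g * (n * a) ->
  1024 * k * (a ^ 2 * sqrt a) * n ^ 2 / (m * sqrt m) <= N ->
  k * sqrt m <= N * g ^ 2 / (32 * p).
Proof.
move=> k_gt0 a_gt0 n_gt0 m_gt0 p_gt0 p_lb gap N_lb.
apply: (Rmult_le_reg_l 32); first lra.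
rewrite (_ : 32 * (N * g ^ 2 / (32 * p)) = N * g ^ 2 / p); last by field; lra.
have sa_gt0 := sqrt_lt_R0 _ a_gt0; have sm_gt0 := sqrt_lt_R0 _ m_gt0.
have sa_sq := sqrt_sqrt _ (Rlt_le _ _ a_gt0); have sm_sq := sqrt_sqrt _ (Rlt_le _ _ m_gt0).
move: (sqrt a) (sqrt m) sa_gt0 sm_gt0 sa_sq sm_sq N_lb => sa sm sa_gt0 sm_gt0 sa_sq sm_sq N_lb.
subst a m.
have p_sa : 1 / 2 <= p * sa.
  have : 0 < p * sa by apply: Rmult_lt_0_compat.
  have : 3 / 8 <= (p * sa) * (p * sa) by rewrite (_ : _ * _ = p ^ 2 * (sa * sa)) //; ring.
  nra.
have g_lb : 0 <= sm * sm * p / (4 * n * (sa * sa)) <= g.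
  split; first by apply: Rmult_le_pos; [nra | apply/Rlt_le/Rinv_0_lt_compat; nra].
  by apply: (Rmult_le_reg_r (4 * n * (sa * sa))); [nra | rewrite /Rdiv Rmult_assoc Rinv_l; nra].
have lhs_ge0 : 0 <= 1024 * k * ((sa * sa) ^ 2 * sa) * n ^ 2 / (sm * sm * sm).
  apply: Rmult_le_pos; last by apply/Rlt_le/Rinv_0_lt_compat; nra.
  by repeat apply: Rmult_le_pos; try apply: pow_le; lra.
apply: (Rle_trans _ (1024 * k * ((sa * sa) ^ 2 * sa) * n ^ 2 / (sm * sm * sm) *
                    (sm * sm * p / (4 * n * (sa * sa))) ^ 2 / p)).
  rewrite (_ : _ / p = 64 * k * (p * sa) * sm).
    have : 0 < k * sm by apply: Rmult_lt_0_compat.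
    nra.
  by field; repeat split; lra.
apply: Rmult_le_compat_r; first exact/Rlt_le/Rinv_0_lt_compat.
apply: Rmult_le_compat => //; first by apply: pow_le; case: g_lb.
by apply: pow_incr.
Qed.

End RealBounds.

Section SuccessProbability.
Local Open Scope R_scope.

Lemma p_succ_cbin n b : ~~ odd n -> ~~ odd b -> (b <= n)%nat ->
  p_succ n b = INR (cbin ((n - b) %/ 2) * cbin (b %/ 2)) / INR (cbin (n %/ 2)).
Proof.
move=> even_n even_b le_bn; have even_nb : ~~ odd (n - b) by rewrite oddB // (negbTE even_n).
by rewrite /p_succ /cbin !even_halfK.
Qed.

Lemma p_succ_gt0 n b : ~~ odd n -> ~~ odd b -> (b <= n)%nat -> 0 < p_succ n b.
Proof.
move=> even_n even_b le_bn; rewrite p_succ_cbin //.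
by apply: Rdiv_lt_0_compat; apply/lt_0_INR/ltP; rewrite ?muln_gt0 !cbin_gt0.
Qed.

Lemma INR_sub_double n a : (a.*2 <= n)%nat -> INR (n - a.*2) = INR n - 2 * INR a.
Proof.
move=> le_2an; rewrite minus_INR; last exact/leP.
by rewrite -mul2n mult_INR /=; lra.
Qed.

Lemma p_succ_balancing n a (y : {ffun 'I_n -> bool}) : ~~ odd n -> ~~ odd a ->
  minn (weight y) (n - weight y) = a ->
  p_succ n a = (INR #|balancing_sets y| / INR #|half_sets n|)%R.
Proof.
move=> even_n even_a; rewrite card_half_sets /p_succ /minn.
have w_le := weight_le y; case: ltnP => _ ea; subst a.
  by rewrite card_balancing_sets // mulnC.
move: even_a; rewrite oddB // (negbTE even_n) /= => even_w.
by rewrite card_balancing_sets // subKn.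
Qed.

Lemma p_succ_le1 n a (y : {ffun 'I_n -> bool}) : ~~ odd n -> ~~ odd a ->
  minn (weight y) (n - weight y) = a -> p_succ n a <= 1.
Proof.
move=> even_n even_a ya; rewrite (p_succ_balancing even_n even_a ya).
have V_gt0 : 0 < INR #|half_sets n| by apply/lt_0_INR/ltP; rewrite card_half_sets bin_gt0 leq_div.
have /le_INR : (#|balancing_sets y| <= #|half_sets n|)%coq_nat.
  by apply/leP/subset_leq_card/balancing_sets_sub.
by move=> le_GV; apply: (Rmult_le_reg_r _ _ _ V_gt0); rewrite /Rdiv Rmult_assoc Rinv_l; lra.
Qed.

Lemma p_succ_ratio n b : ~~ odd n -> ~~ odd b -> (b + 2 <= n)%nat ->
  p_succ n (b + 2) * ((INR n - INR b - 1) * (INR b + 2)) =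
  p_succ n b * ((INR n - INR b) * (INR b + 1)).
Proof.
move=> even_n even_b le_b2n.
have even_b2 : ~~ odd (b + 2) by rewrite oddD (negbTE even_b).
rewrite !p_succ_cbin //; last by lia.
have /even_halfK bA := even_b; have /even_halfK nM := even_n.
move: (b %/ 2) (n %/ 2) bA nM => A M bA nM; subst b n.
have [B MB] : exists B, M = (A + B).+1 by exists (M - A).-1; lia.
subst M.
have -> : ((A + B).+1.*2 - (A.*2 + 2)) %/ 2 = B by lia.
have -> : ((A + B).+1.*2 - A.*2) %/ 2 = B.+1 by lia.
have -> : (A.*2 + 2) %/ 2 = A.+1 by lia.
have := cbin_cross A B.
move: (cbin A) (cbin A.+1) (cbin B) (cbin B.+1) (cbin (A + B).+1) => a a' c c' m.
move=> /(f_equal INR); rewrite -!mul2n !mult_INR !S_INR !plus_INR /= => cross.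
transitivity (2 * / INR m * (INR c * INR a' * ((INR B + (INR B + 0) + 1) * (INR A + 1))));
  first by rewrite /Rdiv; ring.
by rewrite cross /Rdiv; ring.
Qed.

Lemma p_succ_sqr_mul_ge n a : ~~ odd n -> ~~ odd a -> (0 < a < n)%nat ->
  3 / 8 <= p_succ n a ^ 2 * INR a.
Proof.
move=> even_n even_a /andP[a_gt0 lt_an]; rewrite p_succ_cbin //; last exact: ltnW.
have /even_halfK aA := even_a; have /even_halfK nM := even_n.
move: (a %/ 2) (n %/ 2) aA nM => A M aA nM; subst a n.
have [B MB] : exists B, M = (A + B)%nat by exists (M - A)%nat; lia.
subst M; have -> : ((A + B).*2 - A.*2) %/ 2 = B by lia.
have := cbin_addn_sqr_ub (ltac:(lia) : (0 < A)%nat) (ltac:(lia) : (0 < B)%nat).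
have := cbin_gt0 (A + B); move: (cbin A) (cbin B) (cbin (A + B)) => cA cB cAB cAB_gt0.
move=> /leP/le_INR; rewrite -mul2n !mult_INR /= => ub.
have := lt_0_INR _ (ltP cAB_gt0); move: (INR cA) (INR cB) (INR cAB) (INR A) ub => x y z t ub z_gt0.
have -> : y * x / z * (y * x / z * 1) * ((1 + 1) * t) = 2 * t * (x * x * (y * y)) / (z * z).
  by field; lra.
apply: (Rmult_le_reg_r (z * z)); first by nra.
have -> : 2 * t * (x * x * (y * y)) / (z * z) * (z * z) = 2 * t * (x * x * (y * y)).
  by field; lra.
lra.
Qed.

Lemma p_succ_pred_ratio n a : ~~ odd n -> ~~ odd a -> (2 <= a)%nat -> (a <= n)%nat ->
  p_succ n a * ((INR n - INR a + 1) * INR a) =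
  p_succ n (a - 2) * ((INR n - INR a + 2) * (INR a - 1)).
Proof.
move=> even_n even_a a_ge2 le_an; have even_a2 : ~~ odd (a - 2) by rewrite oddB // addbF.
have := p_succ_ratio even_n even_a2 (ltac:(lia) : (a - 2 + 2 <= n)%nat).
rewrite subnK // minus_INR; last exact/leP.
by rewrite (_ : INR 2 = 2) //; lra.
Qed.

Lemma p_succ_pred_gap n a : ~~ odd n -> ~~ odd a -> (2 <= a)%nat -> (a.*2 < n)%nat ->
  INR (n - a.*2) * p_succ n a <= 4 * (p_succ n (a - 2) - p_succ n a) * (INR n * INR a).
Proof.
move=> even_n even_a a_ge2 lt_2an.
have ratio := p_succ_pred_ratio even_n even_a a_ge2 (ltac:(lia) : (a <= n)%nat).
have p_gt0 := p_succ_gt0 even_n even_a (ltac:(lia) : (a <= n)%nat).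
rewrite INR_sub_double; last exact: ltnW.
have /le_INR a_ge2R : (2 <= a)%coq_nat by apply/leP.
have /lt_INR lt_2an_R : (a.*2 < n)%coq_nat by apply/ltP.
rewrite -mul2n mult_INR in lt_2an_R; rewrite (_ : INR 2 = 2) // in a_ge2R lt_2an_R.
move: (p_succ n a) (p_succ n (a - 2)) (INR n) (INR a) ratio p_gt0 a_ge2R lt_2an_R => p q nR aR.
move=> ratio p_gt0 a_ge2R lt_2an_R.
have gap : (q - p) * ((nR - aR + 2) * (aR - 1)) = p * (nR - 2 * aR + 2) by lra.
have : 0 < p * (nR - 2 * aR + 2) by apply: Rmult_lt_0_compat; lra.
have : 0 < (nR - aR + 2) * (aR - 1) by apply: Rmult_lt_0_compat; lra.
move=> X_gt0 rhs_gt0; have le_pq : p <= q by nra.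
have : (nR - aR + 2) * (aR - 1) <= nR * aR by nra.
nra.
Qed.

Lemma p_succ_pred_bounds n a : ~~ odd n -> ~~ odd a -> (2 <= a)%nat -> (a.*2 < n)%nat ->
  p_succ n a <= p_succ n (a - 2) <= 2 * p_succ n a.
Proof.
move=> even_n even_a a_ge2 lt_2an.
have ratio := p_succ_pred_ratio even_n even_a a_ge2 (ltac:(lia) : (a <= n)%nat).
have gap := p_succ_pred_gap even_n even_a a_ge2 lt_2an.
have p_gt0 := p_succ_gt0 even_n even_a (ltac:(lia) : (a <= n)%nat).
have /lt_0_INR m_gt0 : (0 < n - a.*2)%coq_nat by apply/ltP; lia.
have /le_INR a_ge2R : (2 <= a)%coq_nat by apply/leP.
have /le_INR le_an : (a <= n)%coq_nat by apply/leP; lia.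
rewrite (_ : INR 2 = 2) // in a_ge2R.
move: (p_succ n a) (p_succ n (a - 2)) (INR n) (INR a) (INR (n - a.*2))
  ratio gap p_gt0 m_gt0 a_ge2R le_an.
move=> p q nR aR mR ratio gap p_gt0 m_gt0 a_ge2R le_an; split.
  have : 0 < mR * p by apply: Rmult_lt_0_compat.
  have : 0 < nR * aR by apply: Rmult_lt_0_compat; lra.
  nra.
have X_gt0 : 0 < (nR - aR + 2) * (aR - 1) by apply: Rmult_lt_0_compat; lra.
have : (nR - aR + 1) * aR <= 2 * ((nR - aR + 2) * (aR - 1)) by nra.
move=> /(Rmult_le_compat_l p _ _ (Rlt_le _ _ p_gt0)); nra.
Qed.

Lemma p_succ_succ_lt n a : ~~ odd n -> ~~ odd a -> (a.*2.+2 < n)%nat ->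
  p_succ n (a + 2) < p_succ n a.
Proof.
move=> even_n even_a lt_2an; have := p_succ_ratio even_n even_a (ltac:(lia) : (a + 2 <= n)%nat).
have p_gt0 := p_succ_gt0 even_n even_a (ltac:(lia) : (a <= n)%nat).
have /lt_INR := ltP lt_2an; rewrite S_INR S_INR -mul2n mult_INR (_ : INR 2 = 2) // => lt_2an_R.
have a_ge0 := pos_INR a.
move: (p_succ n a) (p_succ n (a + 2)) (INR n) (INR a) p_gt0 lt_2an_R a_ge0 => p q nR aR.
move=> p_gt0 lt_2an_R a_ge0 ratio.
have : 0 < (nR - aR - 1) * (aR + 2) by apply: Rmult_lt_0_compat; lra.
nra.
Qed.

Lemma p_succ_succ_gap n a : ~~ odd n -> ~~ odd a -> (2 <= a)%nat -> (a + 2 <= n %/ 2)%nat ->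
  INR (n - a.*2) * p_succ n a <= 4 * (p_succ n a - p_succ n (a + 2)) * (INR n * INR a).
Proof.
move=> even_n even_a a_ge2 le_a2n; have nM := even_halfK even_n.
have := p_succ_ratio even_n even_a (ltac:(lia) : (a + 2 <= n)%nat).
have lt_qp := p_succ_succ_lt even_n even_a (ltac:(lia) : (a.*2.+2 < n)%nat).
have p_gt0 := p_succ_gt0 even_n even_a (ltac:(lia) : (a <= n)%nat).
rewrite INR_sub_double; last by lia.
have /le_INR a_ge2R : (2 <= a)%coq_nat by apply/leP.
rewrite (_ : INR 2 = 2) // in a_ge2R.
have /le_INR := leP (ltac:(lia) : (a.*2.+4 <= n)%nat).
rewrite !S_INR -mul2n mult_INR (_ : INR 2 = 2) //.
move: (p_succ n a) (p_succ n (a + 2)) (INR n) (INR a) lt_qp p_gt0 a_ge2R => p q nR aR.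
move=> lt_qp p_gt0 a_ge2R le_2a4n ratio.
have gap : (p - q) * ((nR - aR - 1) * (aR + 2)) = p * (nR - 2 * aR - 2) by lra.
have : (nR - aR - 1) * (aR + 2) <= 2 * nR * aR by nra.
have qp_ge0 : 0 <= p - q by lra.
move=> /(Rmult_le_compat_l _ _ _ qp_ge0).
have : 0 <= p * (nR - 2 * aR - 4) by apply: Rmult_le_pos; lra.
lra.
Qed.

Lemma p_succ0 n : ~~ odd n -> p_succ n 0 = 1.
Proof.
move=> even_n; rewrite /p_succ subn0 bin0 muln1 /Rdiv Rinv_r //.
by apply/not_0_INR/eqP; rewrite -lt0n bin_gt0 leq_div.
Qed.

End SuccessProbability.

Section Tails.
Local Open Scope R_scope.

Lemma valid_sampleE n N (f : {ffun 'I_N -> {set 'I_n}}) :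
  valid_sample f = (f \in ffun_on (mem (half_sets n))).
Proof. by apply/forallP/ffun_onP => valid j; have := valid j; rewrite inE. Qed.

Lemma Ycount_valid n N (y : {ffun 'I_n -> bool}) (f : {ffun 'I_N -> {set 'I_n}}) :
  valid_sample f -> Ycount y f = #|[set j | f j \in balancing_sets y]|.
Proof. by move=> /forallP valid; apply: eq_card => j; rewrite !inE valid. Qed.

Lemma prob_event_chernoff n N a (y : {ffun 'I_n -> bool})
    (E : {ffun 'I_N -> {set 'I_n}} -> bool) (s c : R) :
  ~~ odd n -> ~~ odd a -> minn (weight y) (n - weight y) = a ->
  (forall f, valid_sample f -> E f -> s * c <= s * INR (Ycount y f)) ->
  prob_event E <= (1 - p_succ n a + p_succ n a * exp s) ^ N * exp (- (s * c)).
Proof.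
move=> even_n even_a ya tailE; rewrite (p_succ_balancing even_n even_a ya) /prob_event.
set V := half_sets n; set G := balancing_sets y; have subGV : G \subset V := balancing_sets_sub y.
have V_gt0 : 0 < INR #|V| by apply/lt_0_INR/ltP; rewrite card_half_sets bin_gt0 leq_div.
have -> : #|[set f : {ffun 'I_N -> {set 'I_n}} | valid_sample f]| = expn #|V| N.
  rewrite -[X in expn _ X](card_ord N) -card_ffun_on.
  by apply: eq_card => f; rewrite inE valid_sampleE.
have -> : #|[set f : {ffun 'I_N -> {set 'I_n}} | valid_sample f && E f]| =
    #|[set f in ffun_on (mem V) | E f]|.
  by apply: eq_card => f; rewrite !inE valid_sampleE.
rewrite [INR (expn _ _)]INRE GRing.natrX -RpowE -INRE.
have VG : INR #|V :\: G| = INR #|V| - INR #|G|.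
  by rewrite cardsD (setIidPr subGV) minus_INR //; apply/leP/subset_leq_card.
have -> : 1 - INR #|G| / INR #|V| + INR #|G| / INR #|V| * exp s =
    (INR #|V :\: G| + INR #|G| * exp s) / INR #|V| by rewrite VG; field; lra.
have V_N : 0 < INR #|V| ^ N by apply: pow_lt.
apply: (Rle_trans _ ((INR #|V :\: G| + INR #|G| * exp s) ^ N * exp (- (s * c)) / INR #|V| ^ N)).
  apply: Rmult_le_compat_r; first exact/Rlt_le/Rinv_0_lt_compat.
  apply: card_ffun_on_chernoff => // f; rewrite -valid_sampleE => valid Ef.
  by rewrite -Ycount_valid //; apply: tailE.
by right; rewrite Rpow_mult_distr pow_inv; field; lra.
Qed.

Lemma Ycount_upper_tail n N a (y : {ffun 'I_n -> bool}) q :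
  ~~ odd n -> ~~ odd a -> minn (weight y) (n - weight y) = a ->
  p_succ n a <= q <= 2 * p_succ n a ->
  prob_event (n:=n) (N:=N) (fun f => Rleb (INR N * (p_succ n a + q) / 2) (INR (Ycount y f)))
    <= exp (- (INR N * (q - p_succ n a) ^ 2 / (32 * p_succ n a))).
Proof.
move=> even_n even_a ya q_bounds.
have p_gt0 : 0 < p_succ n a by apply: p_succ_gt0; rewrite // -ya minn_weight_le.
set p := p_succ n a in p_gt0 q_bounds *; set d := (q - p) / 2.
have d_bounds : 0 <= d <= 2 * p by rewrite /d; lra.
rewrite (_ : INR N * (q - p) ^ 2 / (32 * p) = INR N * d ^ 2 / (8 * p)); last first.
  by rewrite /d; field; lra.
apply: (Rle_trans _ _ _ _ (chernoff_upper_core N p_gt0 d_bounds)).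
apply: (prob_event_chernoff (y := y)) => // f _.
rewrite /Rleb; case: Rle_dec => // Y_ge _; apply: Rmult_le_compat_l.
  by apply: Rmult_le_pos; [lra | apply/Rlt_le/Rinv_0_lt_compat; lra].
by rewrite /d; lra.
Qed.

Lemma Ycount_lower_tail n N a (y : {ffun 'I_n -> bool}) q :
  ~~ odd n -> ~~ odd a -> minn (weight y) (n - weight y) = a -> q <= p_succ n a ->
  prob_event (n:=n) (N:=N) (fun f => Rleb (INR (Ycount y f)) (INR N * (p_succ n a + q) / 2))
    <= exp (- (INR N * (p_succ n a - q) ^ 2 / (32 * p_succ n a))).
Proof.
move=> even_n even_a ya le_qp.
have p_gt0 : 0 < p_succ n a by apply: p_succ_gt0; rewrite // -ya minn_weight_le.
have p_bounds : 0 < p_succ n a <= 1 by split; last exact: p_succ_le1 ya.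
set p := p_succ n a in p_gt0 p_bounds le_qp *; set d := (p - q) / 2.
have d_ge0 : 0 <= d by rewrite /d; lra.
(* Chernoff gives the exponent [N d^2 / (4 p)]; half of it matches the upper tail. *)
apply: Rle_trans (_ : _ <= exp (- (INR N * d ^ 2 / (4 * p)))) _; last first.
  apply/exp_le_exp/Ropp_le_contravar; rewrite /d.
  have : 0 <= INR N * (p - q) ^ 2 / (32 * p).
    by apply: Rmult_le_pos; [apply: Rmult_le_pos; [apply: pos_INR | apply: pow2_ge_0] |
                             apply/Rlt_le/Rinv_0_lt_compat; lra].
  by rewrite (_ : INR N * ((p - q) / 2) ^ 2 / (4 * p) = 2 * (INR N * (p - q) ^ 2 / (32 * p)));
    [lra | field; lra].
apply: (Rle_trans _ _ _ _ (chernoff_lower_core N p_bounds d_ge0)).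
apply: (prob_event_chernoff (y := y)) => // f _.
rewrite /Rleb; case: Rle_dec => // Y_le _; rewrite !Ropp_mult_distr_l_reverse.
apply: Ropp_le_contravar; apply: Rmult_le_compat_l.
  by apply: Rmult_le_pos; [lra | apply/Rlt_le/Rinv_0_lt_compat; lra].
by rewrite /d; lra.
Qed.

Lemma prob_event_eq0 n N (E : {ffun 'I_N -> {set 'I_n}} -> bool) :
  (forall f, valid_sample f -> ~~ E f) -> prob_event E = 0.
Proof.
move=> notE; rewrite /prob_event (_ : #|_| = 0%nat) ?Rdiv_0_l //.
by apply: eq_card0 => f; rewrite inE; apply/negP => /andP[/notE /negP].
Qed.

Lemma Ycount_extreme n N (y : {ffun 'I_n -> bool}) (f : {ffun 'I_N -> {set 'I_n}}) :
  ~~ odd n -> minn (weight y) (n - weight y) = 0%nat -> valid_sample f -> Ycount y f = N.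
Proof.
move=> even_n y0 valid; rewrite Ycount_valid //.
have -> : balancing_sets y = half_sets n.
  apply/eqP; rewrite eqEcard balancing_sets_sub card_half_sets /=.
  have w_le := weight_le y; move: y0; rewrite /minn; case: ltnP => _ w0.
    by rewrite card_balancing_sets ?w0 // subn0 bin0 mul1n.
  have wn : weight y = n by lia.
  by rewrite card_balancing_sets ?wn // subnn bin0 muln1.
rewrite -[RHS]card_ord; apply: eq_card => j; rewrite inE.
by move: valid; rewrite valid_sampleE => /ffun_onP ->.
Qed.

Lemma prob_Ycount_le_extreme n N (y : {ffun 'I_n -> bool}) c :
  ~~ odd n -> minn (weight y) (n - weight y) = 0%nat -> c < INR N ->
  prob_event (n:=n) (N:=N) (fun f => Rleb (INR (Ycount y f)) c) = 0.
Proof.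
move=> even_n y0 lt_cN; apply: prob_event_eq0 => f valid.
by rewrite Ycount_extreme // /Rleb; case: Rle_dec => // N_le; exfalso; lra.
Qed.

End Tails.

Theorem lemma16 :
  forall k : R, (0 < k)%R ->
  exists K : R,
  forall (n a : nat) (y : {ffun 'I_n -> bool}) (N : nat),
    ~~ odd n -> ~~ odd a -> a.*2 < n ->
    minn (weight y) (n - weight y) = a ->
    (1 <= N)%N ->
    (K * (INR a ^ 2 * sqrt (INR a)) * INR n ^ 2
       / (INR (n - a.*2) * sqrt (INR (n - a.*2))) <= INR N)%R ->
    ((2 <= a)%N ->
      (prob_event (n:=n) (N:=N) (fun f =>
         Rleb (INR N * (p_succ n a + p_succ n (a - 2)) / 2)
              (INR (Ycount y f)))
       <= exp (- (k * sqrt (INR (n - a.*2)))))%R)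
    /\
    ((a + 2 <= n %/ 2)%N ->
      (prob_event (n:=n) (N:=N) (fun f =>
         Rleb (INR (Ycount y f))
              (INR N * (p_succ n a + p_succ n (a + 2)) / 2))
       <= exp (- (k * sqrt (INR (n - a.*2)))))%R).
Proof.
move=> k k_gt0; exists (1024 * k)%R => n a y N even_n even_a lt_2an ya N_ge1 N_lb.
have m_gt0 : (0 < INR (n - a.*2))%R by apply/lt_0_INR/ltP; rewrite subn_gt0.
have n_gt0 : (0 < INR n)%R by apply/lt_0_INR/ltP; lia.
have p_gt0 : (0 < p_succ n a)%R by apply: p_succ_gt0 => //; lia.
have exponent_lb := tail_exponent_ge k_gt0 _ n_gt0 m_gt0 p_gt0 _ _ N_lb.
split => [a_ge2 | le_a2n].
  have q_bounds := p_succ_pred_bounds even_n even_a a_ge2 lt_2an.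
  apply: Rle_trans (Ycount_upper_tail N even_n even_a ya q_bounds) _.
  apply/exp_le_exp/Ropp_le_contravar/exponent_lb; first by apply/lt_0_INR/ltP; lia.
    by apply: p_succ_sqr_mul_ge => //; lia.
  exact: p_succ_pred_gap.
have lt_qp := p_succ_succ_lt even_n even_a (ltac:(lia) : (a.*2.+2 < n)%nat).
have [a0 | a_gt0] := posnP a.
  move: ya lt_qp; rewrite a0 p_succ0 // => y0 lt_q1.
  rewrite prob_Ycount_le_extreme //; first exact/Rlt_le/exp_pos.
  by have := le_INR 1 N (leP N_ge1); rewrite [INR 1]/=; nra.
have a_ge2 : (2 <= a)%nat by have := even_halfK even_a; lia.
apply: Rle_trans (Ycount_lower_tail N even_n even_a ya (Rlt_le _ _ lt_qp)) _.
apply/exp_le_exp/Ropp_le_contravar/exponent_lb; first exact/lt_0_INR/ltP.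
  by apply: p_succ_sqr_mul_ge => //; lia.
exact: p_succ_succ_gap.
Qed.
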